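(* Let $X$ be a reflexive complex Banach space and let $A,B$ be positive self-adjoint operators from $X$ to $X^\ast$ with positive lower bound, such that $\operatorname{dom}J_A^\ast\cap\operatorname{dom}J_B^\ast$ is dense in $X$ (so that the form sum $A\dotplus B$ is defined). Let $E$ be a bounded linear operator on $X$ such that $E(\operatorname{dom}A)\subseteq\operatorname{dom}A$, $E(\operatorname{dom}B)\subseteq\operatorname{dom}B$, $E^\ast A\subseteq AE$ and $E^\ast B\subseteq BE$. Then $$E^\ast(A\dotplus B)\subseteq(A\dotplus B)E.$$
   Context: $X^\ast$ denotes the conjugate dual of $X$ (continuous conjugate-linear functionals on $X$); $X$ is identified with $X^{\ast\ast}$. For $v\in X^\ast$, $x\in X$ write $(v,x):=v(x)$ and $(x,v):=\overline{v(x)}$. An operator $A$ from $X$ to $X^\ast$ is positive if $(Ax,x)\ge0$ for all $x\in\operatorname{dom}A$, has positive lower bound if $(Ax,x)\ge\gamma\|x\|^2$ for some $\gamma>0$; its adjoint $A^\ast$ has domain $\{y\in X:x\mapsto(Ax,y)\text{ continuous on }\operatorname{dom}A\}$ and is determined by $(x,A^\ast y)=(Ax,y)$; $A$ is self-adjoint if $A=A^\ast$. For a bounded operator $E$ on $X$, $E^\ast$ is the bounded operator on $X^\ast$ with $(E^\ast v,x)=(v,Ex)$. For positive self-adjoint $A$: $H_A$ is the completion of $\operatorname{ran}A$ with respect to $[Ax,Ay]_A:=(Ax,y)$; $J_A$ is the operator from $H_A$ to $X^\ast$ with $\operatorname{dom}J_A=\operatorname{ran}A$, $J_A(Ax)=Ax$;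 $J_A^\ast$ is the operator from $X$ to $H_A$ with $\operatorname{dom}J_A^\ast=\{y\in X:h\mapsto(J_Ah,y)\text{ continuous on }\operatorname{dom}J_A\}$ and $[h,J_A^\ast y]_A=(J_Ah,y)$. Form sum: $H_{A,B}:=\operatorname{dom}J_A^\ast\cap\operatorname{dom}J_B^\ast$ with inner product $t(x,y)=[J_A^\ast x,J_A^\ast y]_A+[J_B^\ast x,J_B^\ast y]_B$ is a Hilbert space; $A\dotplus B$ has domain $\{x\in H_{A,B}: y\mapsto t(x,y)\text{ continuous on }H_{A,B}\text{ in the norm of }X\}$, and $(A\dotplus B)x$ is the $z\in X^\ast$ with $(z,y)=t(x,y)$ for all $y\in H_{A,B}$. *)

From HB Require Import structures.
From mathcomp Require Import all_boot all_order all_algebra.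
From mathcomp Require Import all_classical all_reals all_analysis.
From mathcomp.real_closed Require Export complex.
Import Order.TTheory GRing.Theory Num.Theory.
Import numFieldNormedType.Exports.
Local Open Scope classical_set_scope.
Local Open Scope ring_scope.

Set Implicit Arguments.
Unset Strict Implicit.
Unset Printing Implicit Defensive.

Section Defs.
Variable R : realType.
Local Notation C := R[i].
Variable X : completeNormedModType C.

(** Elements of X^* are represented as functions v : X -> C satisfying
    [in_dual]; the pairing is (v,x) := v x and (x,v) := Num.conj (v x). *)
Definition conj_linear (v : X -> C) : Prop :=
  forall (a : C) (x y : X), v (a *: x + y) = (Num.conj a) * v x + v y.

Definition in_dual (v : X -> C) : Prop := conj_linear v /\ continuous (fun x => (v x : C^o)).

(** Reflexivity: the canonical map x |-> (v |-> (x,v) = Num.conj (v x)) from X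
    into X^** (continuous conjugate-linear functionals on X^*, with X^*
    carrying the dual norm) is onto.  A functional Phi on X^* is continuous
    for the dual norm iff it is bounded: |Phi v| <= c ||v||_*; here
    "||v||_* <= M" is written "forall x, |v x| <= M ||x||". *)
Definition bidual_elt (Phi : (X -> C) -> C) : Prop :=
  (forall (a : C) v w, in_dual v -> in_dual w ->
     Phi (fun x => a * v x + w x) = (Num.conj a) * Phi v + Phi w) /\
  (exists c : C, forall v, in_dual v ->
     forall M : C, (forall x, `|v x| <= M * `|x|) -> `|Phi v| <= c * M).

Definition reflexive_space : Prop :=
  forall Phi, bidual_elt Phi -> exists x : X, forall v, in_dual v -> Phi v = Num.conj (v x).

Definition operator (dA : set X) (A : X -> X -> C) : Prop :=
  [/\ dA 0, (forall (a : C) x y, dA x -> dA y -> dA (a *: x + y)),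
      (forall (a : C) x y, dA x -> dA y ->
          A (a *: x + y) = (fun w => a * A x w + A y w)) &
      (forall x, dA x -> in_dual (A x))].

Definition positive_op (dA : set X) (A : X -> X -> C) : Prop :=
  forall x, dA x -> 0 <= A x x.

Definition pos_lower_bound (dA : set X) (A : X -> X -> C) : Prop :=
  exists gamma : C, 0 < gamma /\ forall x, dA x -> gamma * `|x| ^+ 2 <= A x x.

(** Adjoint: dom A^* = {y | x |-> (Ax,y) continuous on dom A},
    and A^* y is the element z of X^* with (x, A^* y) = (Ax, y),
    i.e. (z x)^* = A x y for x in dom A. *)
Definition adj_dom (dA : set X) (A : X -> X -> C) : set X :=
  [set y | {within dA, continuous (fun x => (A x y : C^o))}].

Definition self_adjoint (dA : set X) (A : X -> X -> C) : Prop :=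
  (forall y, dA y <-> adj_dom dA A y) /\
  (forall y, dA y -> in_dual (A y) /\ forall x, dA x -> Num.conj (A y x) = A x y).

(** dom J_A^*: y such that h |-> (J_A h, y) is continuous on ran A for the
    norm of H_A, ||Ax||_A^2 = [Ax,Ax]_A = (Ax,x).  For this linear functional
    continuity is boundedness: |(Ax,y)|^2 <= c (Ax,x). *)
Definition domJ (dA : set X) (A : X -> X -> C) : set X :=
  [set y | exists c : C, forall x, dA x -> `|A x y| ^+ 2 <= c * A x x].

(** The completion H_A, realized by Cauchy sequences in ran A:
    the sequence (A (u n))_n, u n in dom A, is Cauchy for ||.||_A.
    [repJ A u y] says that this Cauchy sequence represents J_A^* y, i.e.
    [Ax, J_A^* y]_A = lim_n [Ax, A (u n)]_A = lim_n (Ax, u n) equals (Ax, y)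
    for every x in dom A. *)
Definition cauchyA (dA : set X) (A : X -> X -> C) (u : nat -> X) : Prop :=
  (forall n, dA (u n)) /\
  (forall eps : C, 0 < eps -> exists N, forall n m, (N <= n)%N -> (N <= m)%N ->
      A (u n - u m) (u n - u m) <= eps).

Definition repJ (dA : set X) (A : X -> X -> C) (u : nat -> X) (y : X) : Prop :=
  cauchyA dA A u /\
  (forall x, dA x -> (fun n => (A x (u n) : C^o)) @ \oo --> (A x y : C^o)).

(** [tA A x y c]: c = [J_A^* x, J_A^* y]_A, computed as the limit of the
    inner products [A (u n), A (w n)]_A = (A (u n), w n) of representing
    Cauchy sequences. *)
Definition tA (dA : set X) (A : X -> X -> C) (x y : X) (c : C) : Prop :=
  exists u w, [/\ repJ dA A u x, repJ dA A w y &
                  (fun n => (A (u n) (w n) : C^o)) @ \oo --> (c : C^o)].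

Definition HAB (dA : set X) (A : X -> X -> C) (dB : set X) (B : X -> X -> C)
  : set X := domJ dA A `&` domJ dB B.

Definition tform (dA : set X) (A : X -> X -> C) (dB : set X) (B : X -> X -> C)
  (x y : X) (c : C) : Prop :=
  exists cA cB, [/\ tA dA A x y cA, tA dB B x y cB & c = cA + cB].

(** Graph of the form sum A \dotplus B: x in dom(A \dotplus B) and
    (A \dotplus B) x = z.  Continuity of y |-> t(x,y) on H_{A,B} w.r.t. the
    norm of X is expressed as boundedness of this linear functional. *)
Definition form_sum (dA : set X) (A : X -> X -> C) (dB : set X) (B : X -> X -> C)
  (x : X) (z : X -> C) : Prop :=
  [/\ HAB dA A dB B x,
      (exists k : C, forall y c, HAB dA A dB B y -> tform dA A dB B x y c ->
          `|c| <= k * `|y|),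
      in_dual z &
      (forall y c, HAB dA A dB B y -> tform dA A dB B x y c -> z y = c)].

Definition dual_op (E : X -> X) (v : X -> C) : X -> C := fun x => v (E x).

End Defs.

(* Write [Q x = (A x, x)].  The intertwining hypothesis reads
   [(A (E x), w) = (A x, E w)], so [a_k = Q (E^k x) = (A x, E^(2k) x)].  By
   Cauchy-Schwarz [(a_k)] is log-convex, and it grows at most like [|E|^(2k)];
   a log-convex sequence of geometric growth rate [l] satisfies [a_1 <= l a_0],
   hence [Q (E x) <= |E|^2 Q x].  So [E] is bounded for the norm of [H_A]: it
   maps [dom J_A^*] into itself and sends a Cauchy sequence [(A u_n)]
   representing [J_A^* y] (one exists: minimise [Q v - 2 Re (A v, y)]) to one
   representing [J_A^* (E y)].  As all representatives give the same limits,
   [[J_A^* (E x), J_A^* y]_A = [J_A^* x, J_A^* (E y)]_A], and likewise for [B];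
   thus [t (E x, y) = t (x, E y) = ((A ∔ B) x, E y) = (E^* (A ∔ B) x, y)]. *)

From HB Require Import structures.
From mathcomp Require Import all_boot all_order all_algebra.
From mathcomp Require Import all_classical all_reals all_analysis.
From mathcomp.real_closed Require Import complex.
From mathcomp Require Import ring lra zify.
Import Order.TTheory GRing.Theory Num.Theory.
Import numFieldNormedType.Exports.
Local Open Scope classical_set_scope.
Local Open Scope ring_scope.

Set Implicit Arguments.
Unset Strict Implicit.
Unset Printing Implicit Defensive.

Lemma continuous_linear_le_norm (K : numFieldType) (V W : normedModType K)
    (f : {linear V -> W}) :
  continuous f -> exists2 L, 0 < L & forall x, `|f x| <= L * `|x|.
Proof.
move=> fc; have := continuous_linear_bounded 0 (fc 0).
by move=> /linear_boundedP/pinfty_ex_gt0 [L L0 fL]; exists L.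
Qed.

Lemma continuous_conjC (R : rcfType) :
  continuous (fun z : R[i]^o => (z^* : R[i]^o)).
Proof.
move=> z; apply/(@cvgrPdist_lt _ _ _ (nbhs z)) => e e0; near=> w.
by rewrite -rmorphB /= norm_conjC; near: w; apply: cvgr_dist_lt.
Unshelve. all: by end_near. Qed.

Lemma dual_le_norm (R : realType) (X : completeNormedModType R[i])
    (v : X -> R[i]) :
  in_dual v -> exists2 K, 0 < K & forall x, `|v x| <= K * `|x|.
Proof.
case=> vL vc; pose f x : R[i]^o := (v x)^*.
have fL : linear f by move=> a x y; rewrite /f vL rmorphD rmorphM /= conjCK.
pose lf : {linear X -> R[i]^o} := HB.pack f (GRing.isLinear.Build _ _ _ _ _ fL).
have [K K0 fK] : exists2 K, 0 < K & forall x, `|lf x| <= K * `|x|.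
  apply: continuous_linear_le_norm => x.
  exact: (continuous_comp (vc x) (@continuous_conjC R (v x))).
by exists K => // x; rewrite -norm_conjC; apply: fK.
Qed.

Lemma cvg_seqP (K : numFieldType) (s : nat -> K) (l : K) :
  (fun n => s n : K^o) @ \oo --> (l : K^o) <->
  forall eps, 0 < eps -> exists N, forall n, (N <= n)%N -> `|l - s n| <= eps.
Proof.
split=> [/cvgrPdist_le sl eps /sl [N _ slN]|sl]; first by exists N.
by apply/cvgrPdist_le => eps /sl [N slN]; exists N.
Qed.

Lemma harmonicC_le (R : realType) (e : R[i]) : 0 < e ->
  exists N, forall n, (N <= n)%N -> n.+1%:R^-1 <= e.
Proof.
move=> e0; have Re0 : 0 < complex.Re e by move: e0; rewrite ltcE => /andP[].
have [N _ hN] := near_infty_natSinv_lt (PosNum Re0).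
exists N => n /hN /ltW /=; rewrite -lecR fmorphV rmorph_nat.
by rewrite RRe_real ?gtr0_real.
Qed.

Lemma Re_le_norm (R : rcfType) (z : R[i]) : complex.Re z <= complex.Re `|z|.
Proof.
case: z => a b; rewrite normc_def /=.
apply: le_trans (ler_norm a) _; rewrite -sqrtr_sqr.
by apply: ler_wsqrtr; rewrite lerDl sqr_ge0.
Qed.

Lemma Re_natM (R : rcfType) n (z : R[i]) :
  complex.Re (n%:R * z) = n%:R * complex.Re z.
Proof. by rewrite !mulr_natl raddfMn. Qed.

Lemma lec_Re (R : rcfType) (z w : R[i]) :
  0 <= z -> 0 <= w -> (z <= w) = (complex.Re z <= complex.Re w).
Proof. by move=> z_ge0 w_ge0; rewrite lecE !ger0_Im // eqxx. Qed.

Section LogConvex.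
Variable R : archiRealFieldType.

Lemma logconvex_bounded_le (b : nat -> R) (M : R) :
  (forall k, 0 <= b k) -> (forall k, b k.+1 ^+ 2 <= b k * b k.+2) ->
  (forall k, b k <= M) -> b 1%N <= b 0%N.
Proof.
move=> b_ge0 b_cvx b_le; rewrite leNgt; apply/negP => b01.
have b0_gt0 : 0 < b 0%N.
  rewrite lt_def b_ge0 andbT; apply/eqP => b00.
  by have := b_cvx 0%N; rewrite b00 mul0r; nra.
pose q := b 1%N / b 0%N.
have q_gt1 : 1 < q by rewrite /q ltr_pdivlMr // mul1r.
have ratio k : q * b k <= b k.+1 /\ b 0%N <= b k.
  elim: k => [|k [ratio_k b0k]]; first by rewrite /q divfK ?gt_eqF.
  split; last by have := b_ge0 k; nra.
  have := b_cvx k; have := b_ge0 k.+1; have := b_ge0 k.+2; nra.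
have growth k : b 0%N + k%:R * (b 1%N - b 0%N) <= b k.
  elim: k => [|k ih]; first by rewrite mul0r addr0.
  have [ratio_k b0k] := ratio k.
  have qb0 : q * b 0%N = b 1%N by rewrite /q divfK ?gt_eqF.
  rewrite mulrSr mulrDl addrA; nra.
have M_ge0 : 0 <= M / (b 1%N - b 0%N).
  by rewrite divr_ge0 ?subr_ge0 ?(ltW b01) // (le_trans (b_ge0 0%N)).
have := archi_boundP M_ge0; set k := Num.Def.archi_bound _.
rewrite ltr_pdivrMr ?subr_gt0 // => Mk.
by have := growth k; have := b_le k; nra.
Qed.

Lemma logconvex_le_geometric (a : nat -> R) (l M : R) : 0 < l ->
  (forall k, 0 <= a k) -> (forall k, a k.+1 ^+ 2 <= a k * a k.+2) ->
  (forall k, a k <= M * l ^+ k) -> a 1%N <= l * a 0%N.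
Proof.
move=> l_gt0 a_ge0 a_cvx a_le.
have lk_gt0 k : 0 < l ^+ k by rewrite exprn_gt0.
suff : a 1%N / l ^+ 1 <= a 0%N / l ^+ 0 by rewrite ler_pdivrMr // mulrC divr1.
apply: (@logconvex_bounded_le (fun k => a k / l ^+ k) M) => [k|k|k].
- by rewrite divr_ge0 // ltW.
- have -> : (a k.+1 / l ^+ k.+1) ^+ 2 = a k.+1 ^+ 2 / (l ^+ k * l ^+ k.+2).
    by rewrite -exprD expr_div_n -exprM; congr (_ / l ^+ _); lia.
  by rewrite mulf_div ler_pM2r // invr_gt0 mulr_gt0.
- by rewrite ler_pdivrMr.
Qed.

End LogConvex.

Lemma logconvexC_le_geometric (R : realType) (a : nat -> R[i]) (l M : R[i]) :
  0 < l -> (forall k, 0 <= a k) -> (forall k, a k.+1 ^+ 2 <= a k * a k.+2) ->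
  (forall k, a k <= M * l ^+ k) -> a 1%N <= l * a 0%N.
Proof.
move=> l_gt0 a_ge0 a_cvx a_le.
have M_ge0 : 0 <= M by have := a_le 0%N; rewrite expr0 mulr1; apply: le_trans.
have aR k : a k = (complex.Re (a k))%:C%C by rewrite RRe_real ?ger0_real.
have [lR MR] : l = (complex.Re l)%:C%C /\ M = (complex.Re M)%:C%C.
  by rewrite !RRe_real ?ger0_real ?(ltW l_gt0).
rewrite aR [a 0%N]aR lR -rmorphM lecR.
pose b k := complex.Re (a k).
apply: (@logconvex_le_geometric R b _ (complex.Re M)) => [|k|k|k].
- by rewrite -ltcR -lR.
- by rewrite -lecR -aR.
- by rewrite -lecR rmorphXn rmorphM /= -!aR.
- by rewrite -lecR rmorphM rmorphXn /= -aR -lR -MR.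
Qed.
Section PositiveOperator.
Variables (R : realType) (X : completeNormedModType R[i]).
Local Notation C := R[i].
Local Notation Re := (@complex.Re R).
Variables (dA : set X) (A : X -> X -> C).
Hypotheses (opA : operator dA A) (saA : self_adjoint dA A).
Hypotheses (posA : positive_op dA A) (lbA : pos_lower_bound dA A).

Lemma dom0 : dA 0. Proof. by case: opA. Qed.

Lemma domZD a x y : dA x -> dA y -> dA (a *: x + y).
Proof. by case: opA => _ + _ _; apply. Qed.

Lemma domZ a x : dA x -> dA (a *: x).
Proof. by move=> x_dA; rewrite -[_ *: _]addr0; apply: domZD x_dA dom0. Qed.

Lemma domD x y : dA x -> dA y -> dA (x + y).
Proof. by move=> x_dA; rewrite -[x]scale1r; apply: domZD. Qed.

Lemma domN x : dA x -> dA (- x).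
Proof. by move=> /(domZ (-1)); rewrite scaleN1r. Qed.

Lemma domB x y : dA x -> dA y -> dA (x - y).
Proof. by move=> x_dA /domN; apply: domD. Qed.

Lemma opZD a x y w : dA x -> dA y -> A (a *: x + y) w = a * A x w + A y w.
Proof. by case: opA => _ _ AZD _ x_dA y_dA; rewrite AZD. Qed.

Lemma op0 w : A 0 w = 0.
Proof.
have := opZD 1 w dom0 dom0; rewrite scale1r addr0 mul1r => A0.
by apply: (addrI (A 0 w)); rewrite addr0 -A0.
Qed.

Lemma opZ a x w : dA x -> A (a *: x) w = a * A x w.
Proof. by move=> x_dA; rewrite -[_ *: _]addr0 opZD ?op0 ?addr0 //; apply: dom0. Qed.

Lemma opD x y w : dA x -> dA y -> A (x + y) w = A x w + A y w.
Proof. by move=> x_dA y_dA; rewrite -{1}[x]scale1r opZD // mul1r. Qed.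

Lemma opN x w : dA x -> A (- x) w = - A x w.
Proof. by move=> x_dA; rewrite -scaleN1r opZ // mulN1r. Qed.

Lemma opB x y w : dA x -> dA y -> A (x - y) w = A x w - A y w.
Proof. by move=> x_dA y_dA; rewrite opD ?opN //; apply: domN. Qed.

Lemma op_dual x : dA x -> in_dual (A x).
Proof. by case: opA => _ _ _; apply. Qed.

Lemma opZDr x a v w : dA x -> A x (a *: v + w) = a^* * A x v + A x w.
Proof. by move=> /op_dual[AZD _]; exact: AZD. Qed.

Lemma op0r x : dA x -> A x 0 = 0.
Proof.
move=> x_dA; have := opZDr 1 0 0 x_dA; rewrite scale1r addr0 conjC1 mul1r => A0.
by apply: (addrI (A x 0)); rewrite addr0 -A0.
Qed.

Lemma opZr x a v : dA x -> A x (a *: v) = a^* * A x v.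
Proof. by move=> x_dA; rewrite -[_ *: _]addr0 opZDr // op0r // addr0. Qed.

Lemma opDr x v w : dA x -> A x (v + w) = A x v + A x w.
Proof. by move=> x_dA; rewrite -{1}[v]scale1r opZDr // conjC1 mul1r. Qed.

Lemma opNr x v : dA x -> A x (- v) = - A x v.
Proof. by move=> x_dA; rewrite -scaleN1r opZr // rmorphN1 mulN1r. Qed.

Lemma opBr x v w : dA x -> A x (v - w) = A x v - A x w.
Proof. by move=> x_dA; rewrite opDr ?opNr. Qed.

Lemma op_conj x y : dA x -> dA y -> A x y = (A y x)^*.
Proof. by move=> x_dA y_dA; case: saA => _ /(_ y y_dA) [_ /(_ x x_dA) ->]. Qed.

Lemma op_ge0 x : dA x -> 0 <= A x x. Proof. exact: posA. Qed.

Lemma op_eq0 y : dA y -> A y y = 0 -> y = 0.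
Proof.
move=> y_dA Ayy0; case: lbA => g [g_gt0 /(_ y y_dA)]; rewrite Ayy0 => gy.
apply/normr0_eq0/eqP; rewrite -sqrf_eq0 eq_le exprn_ge0 // andbT.
by rewrite -(pmulr_rle0 _ g_gt0).
Qed.

Lemma op_CauchySchwarz x y : dA x -> dA y -> `|A x y| ^+ 2 <= A x x * A y y.
Proof.
move=> x_dA y_dA; have [->|y_neq0] := eqVneq y 0.
  by rewrite op0r // normr0 expr0n /= mulr_ge0 ?op_ge0 //; apply: dom0.
have Ayy_gt0 : 0 < A y y.
  by rewrite lt_def op_ge0 // andbT; apply: contra_neq y_neq0; apply: op_eq0.
set a := A x y; set Q := A y y.
(* minimise the A-norm of [x + t y] at [t = - a / Q] *)
have ty_dA := domZ (- a / Q) y_dA.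
have := op_ge0 (domD x_dA ty_dA).
rewrite !(opD, opDr, opZ, opZr) // -/a -/Q (op_conj y_dA x_dA) -/a.
have Q_real : Q^* = Q by rewrite /Q -op_conj.
rewrite rmorphM rmorphN fmorphV /= Q_real normCK.
have Q_neq0 : Q != 0 by rewrite gt_eqF.
have -> : A x x + (- a^* / Q * a) + (- a / Q * a^* + - a / Q * (- a^* / Q * Q))
   = A x x - a * a^* / Q by field.
by rewrite subr_ge0 ler_pdivrMr.
Qed.

Lemma op_parallelogram x y : dA x -> dA y ->
  A (x + y) (x + y) + A (x - y) (x - y) = 2 * A x x + 2 * A y y.
Proof. by move=> x_dA y_dA; rewrite opD // opB // !opDr // !opNr //; ring. Qed.

Lemma op_addsq_le x y : dA x -> dA y ->
  A (x + y) (x + y) <= 2 * A x x + 2 * A y y.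
Proof.
by move=> x_dA y_dA; rewrite -op_parallelogram // lerDl op_ge0 //; apply: domB.
Qed.

Lemma op_subsq_le x y : dA x -> dA y ->
  A (x - y) (x - y) <= 2 * A x x + 2 * A y y.
Proof.
by move=> x_dA y_dA; rewrite -op_parallelogram // lerDr op_ge0 //; apply: domD.
Qed.

Lemma cauchyA_bounded u : cauchyA dA A u ->
  exists N (B : C), 0 < B /\ forall n, (N <= n)%N -> A (u n) (u n) <= B.
Proof.
case=> u_dA /(_ 1 ltr01) [N uN]; exists N, (2 + 2 * A (u N) (u N)); split.
  by rewrite -[0]addr0 ltr_leD // mulr_ge0 ?op_ge0.
move=> n Nn; rewrite -(subrK (u N) (u n)).
apply: le_trans (op_addsq_le (domB (u_dA n) (u_dA N)) (u_dA N)) _.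
by rewrite lerD2r -[2 in leRHS]mulr1 ler_pM2l ?uN.
Qed.

Lemma op_weak0_cauchy_cvg0 (r w : nat -> X) (N : nat) (B : C) :
  (forall n, dA (r n)) -> 0 < B -> (forall n, (N <= n)%N -> A (r n) (r n) <= B) ->
  (forall v, dA v -> (fun n => A v (r n) : C^o) @ \oo --> (0 : C^o)) ->
  cauchyA dA A w -> (fun n => A (r n) (w n) : C^o) @ \oo --> (0 : C^o).
Proof.
move=> r_dA B_gt0 rB r_weak0 [w_dA w_cauchy]; apply/cvg_seqP => eps eps_gt0.
pose e := eps / 2; have e_gt0 : 0 < e by rewrite divr_gt0.
have [M0 wM0] := w_cauchy (e ^+ 2 / B) (divr_gt0 (exprn_gt0 2 e_gt0) B_gt0).
pose M := maxn N M0.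
have /cvg_seqP /(_ e e_gt0) [N1 rN1] := r_weak0 _ (w_dA M).
exists (maxn M N1) => n MN1n.
have [Nn M0n M0M N1n] : [/\ (N <= n)%N, (M0 <= n)%N, (M0 <= M)%N & (N1 <= n)%N].
  by move: MN1n; rewrite /M; split; lia.
have near_term : `|A (r n) (w n - w M)| <= e.
  suff : `|A (r n) (w n - w M)| ^+ 2 <= e ^+ 2 by rewrite ler_pXn2r // ?nnegrE ?ltW.
  apply: le_trans (op_CauchySchwarz (r_dA n) (domB (w_dA n) (w_dA M))) _.
  apply: le_trans (ler_pM (op_ge0 (r_dA n)) (op_ge0 (domB (w_dA n) (w_dA M)))
                          (rB n Nn) (wM0 n M M0n M0M)) _.
  by rewrite mulrC divfK ?gt_eqF.
have far_term : `|A (r n) (w M)| <= e.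
  by rewrite op_conj // norm_conjC -normrN -sub0r; apply: rN1.
rewrite sub0r normrN -(subrK (w M) (w n)) opDr //.
by apply: le_trans (ler_normD _ _) _; rewrite [eps]splitr lerD.
Qed.

Lemma repJ_cvg_unique (x : X) (p q w : nat -> X) (c : C) :
  repJ dA A p x -> repJ dA A q x -> cauchyA dA A w ->
  (fun n => A (q n) (w n) : C^o) @ \oo --> (c : C^o) ->
  (fun n => A (p n) (w n) : C^o) @ \oo --> (c : C^o).
Proof.
move=> [p_cauchy px] [q_cauchy qx] w_cauchy qwc.
have [[p_dA _] [q_dA _]] := (p_cauchy, q_cauchy).
have r_dA n : dA (p n - q n) by apply: domB.
have [Np [Bp [Bp_gt0 pB]]] := cauchyA_bounded p_cauchy.
have [Nq [Bq [Bq_gt0 qB]]] := cauchyA_bounded q_cauchy.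
have rB n : (maxn Np Nq <= n)%N -> A (p n - q n) (p n - q n) <= 2 * Bp + 2 * Bq.
  rewrite geq_max => /andP[Npn Nqn]; apply: le_trans (op_subsq_le (p_dA n) (q_dA n)) _.
  by rewrite lerD // ler_pM2l // ?pB ?qB.
have r_weak0 v : dA v -> (fun n => A v (p n - q n) : C^o) @ \oo --> (0 : C^o).
  move=> v_dA; rewrite -(subrr (A v x)).
  have -> : (fun n => A v (p n - q n) : C^o) = (fun n => A v (p n) - A v (q n)).
    by apply/funext => n; rewrite opBr.
  exact: cvgB (px v v_dA) (qx v v_dA).
have Bpq_gt0 : 0 < 2 * Bp + 2 * Bq by rewrite addr_gt0 ?mulr_gt0.
have -> : (fun n => A (p n) (w n) : C^o)
    = (fun n => A (q n) (w n) + A (p n - q n) (w n)).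
  by apply/funext => n; rewrite opB // addrC subrK.
rewrite -[c]addr0.
exact: cvgD qwc (op_weak0_cauchy_cvg0 r_dA Bpq_gt0 rB r_weak0 w_cauchy).
Qed.

Lemma domJ_ge0 y : domJ dA A y ->
  exists c : C, 0 <= c /\ forall v, dA v -> `|A v y| ^+ 2 <= c * A v v.
Proof.
case=> c yc; exists `|c|; split => // v v_dA.
have [/(op_eq0 v_dA) ->|Avv_neq0] := eqVneq (A v v) 0.
  by rewrite op0 normr0 expr0n /= mulr_ge0 ?op_ge0 //; apply: dom0.
have Avv_gt0 : 0 < A v v by rewrite lt_def Avv_neq0 op_ge0.
have c_ge0 : 0 <= c.
  by rewrite -(pmulr_lge0 _ Avv_gt0) (le_trans _ (yc v v_dA)) ?exprn_ge0.
by rewrite (ger0_norm c_ge0) yc.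
Qed.

(* [energy y v = |J_A v - J_A^* y|^2 - |J_A^* y|^2] in [H_A]: its minimising
   sequences represent [J_A^* y]. *)
Definition energy y v := A v v - A v y - (A v y)^*.

Lemma Re_energy y v : Re (energy y v) = Re (A v v) - 2 * Re (A v y).
Proof. by rewrite !raddfB /= [Re _^*]/=; case: (A v y) => a b /=; lra. Qed.

Lemma energy_ge y c : 0 <= c -> (forall v, dA v -> `|A v y| ^+ 2 <= c * A v v) ->
  forall v, dA v -> - Re c <= Re (energy y v).
Proof.
move=> c_ge0 yc v v_dA; rewrite Re_energy.
have Re_le : Re (A v y) <= Re `|A v y| by apply: Re_le_norm.
have := yc v v_dA.
rewrite -[c]RRe_real ?ger0_real // -[A v v]RRe_real ?ger0_real ?op_ge0 //.
rewrite -[`|_|]RRe_real ?ger0_real // -rmorphXn -rmorphM lecR => yc_v.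
have Re_c : 0 <= Re c by rewrite -ler0c RRe_real ?ger0_real.
have Re_Avv : 0 <= Re (A v v) by rewrite -ler0c RRe_real ?ger0_real ?op_ge0.
have Re_norm : 0 <= Re `|A v y| by rewrite -ler0c RRe_real ?ger0_real.
have : 2 * Re `|A v y| <= Re (A v v) + Re c.
  rewrite -(@ler_pXn2r _ 2) // ?nnegrE ?mulr_ge0 ?addr_ge0 //.
  by have := sqr_ge0 (Re (A v v) - Re c); nra.
lra.
Qed.

Lemma energy_midpoint y p q : dA p -> dA q ->
  A (p - q) (p - q)
  = 2 * energy y p + 2 * energy y q - 4 * energy y (2^-1 *: (p + q)).
Proof.
move=> p_dA q_dA; have pq_dA := domD p_dA q_dA.
rewrite /energy opB // !opBr // !opZ // !opZr // !opD // !opDr //.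
rewrite !rmorphM !rmorphD /= fmorphV rmorph_nat.
by field.
Qed.

Lemma Re_energy_midpoint y p q : dA p -> dA q ->
  Re (A (p - q) (p - q)) = 2 * Re (energy y p) + 2 * Re (energy y q)
                           - 4 * Re (energy y (2^-1 *: (p + q))).
Proof.
by move=> p_dA q_dA; rewrite (energy_midpoint y) // raddfB raddfD /= !Re_natM.
Qed.

Lemma energy_shift y u v t : dA u -> dA v ->
  energy y (u + t *: v) = energy y u + t * (A v u - A v y)
    + (t * (A v u - A v y))^* + t * t^* * A v v.
Proof.
move=> u_dA v_dA; have tv_dA := domZ t v_dA.
rewrite /energy !opD // !opDr // !opZ // !opZr // (op_conj u_dA v_dA).
by rewrite ?(rmorphM, rmorphB, rmorphD) /=; ring.
Qed.

Definition energy_minimizing y (u : nat -> X) :=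
  forall n, dA (u n) /\
    forall v, dA v -> Re (energy y (u n)) <= Re (energy y v) + n.+1%:R^-1.

Lemma energy_minimizing_exists y : domJ dA A y ->
  exists u, energy_minimizing y u.
Proof.
move=> /domJ_ge0 [c [c_ge0 yc]].
pose S := [set Re (energy y v) | v in dA].
have S_inf : has_inf S.
  split; first by exists (Re (energy y 0)), 0 => //; apply: dom0.
  by exists (- Re c) => _ [v v_dA <-]; apply: energy_ge.
have S_ge v : dA v -> inf S <= Re (energy y v).
  by move=> v_dA; apply: (ge_inf S_inf.2); exists v.
have near_inf n : exists v, dA v /\ Re (energy y v) < inf S + n.+1%:R^-1.
  have n_gt0 : 0 < (n.+1%:R : R)^-1 by rewrite invr_gt0.
  have [_ [v v_dA <-] ?] := inf_adherent n_gt0 S_inf.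
  by exists v.
have [u u_min] := choice near_inf; exists u => n.
have [un_dA un_lt] := u_min n; split=> // v v_dA.
by rewrite ltW // (lt_le_trans un_lt) // lerD2r S_ge.
Qed.

Lemma energy_minimizing_cauchyA y u : energy_minimizing y u -> cauchyA dA A u.
Proof.
move=> u_min; split=> [n|eps eps_gt0]; first by case: (u_min n).
have Re_eps : 0 < Re eps by move: eps_gt0; rewrite ltcE => /andP[].
have [N _ hN] := near_infty_natSinv_lt (PosNum (divr_gt0 Re_eps (ltr0n R 4))).
exists N => n m Nn Nm; have [[un_dA un_min] [um_dA um_min]] := (u_min n, u_min m).
have mid_dA : dA (2^-1 *: (u n + u m)) by apply/domZ/domD.
have diff_dA : dA (u n - u m) by apply: domB.
have hn : n.+1%:R^-1 < Re eps / 4 := hN n Nn.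
have hm : m.+1%:R^-1 < Re eps / 4 := hN m Nm.
rewrite -[A _ _]RRe_real ?ger0_real ?op_ge0 //.
rewrite -[eps]RRe_real ?gtr0_real // lecR (Re_energy_midpoint y) //.
have := un_min _ mid_dA; have := um_min _ mid_dA; move: hn hm.
(* [hn], [hm] and [u_min] elaborate [k.+1%:R^-1] through different instance
   paths; generalising them gives lra common atoms *)
move: (n.+1%:R^-1 : R) (m.+1%:R^-1 : R) => a b; lra.
Qed.

Lemma energy_minimizing_variation y u e v :
  dA u -> dA v -> (forall w, dA w -> Re (energy y u) <= Re (energy y w) + e) ->
  Re (`|A v u - A v y| ^+ 2) <= (Re (A v v) + 1) * e.
Proof.
move=> u_dA v_dA u_min; set d := A v u - A v y; set q := Re (A v v).
set P := Re (`|d| ^+ 2).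
have q_ge0 : 0 <= q by rewrite -ler0c RRe_real ?ger0_real ?op_ge0.
have P_ge0 : 0 <= P by rewrite -ler0c RRe_real ?ger0_real ?exprn_ge0.
have Avv : A v v = q%:C%C by rewrite RRe_real ?ger0_real ?op_ge0.
have dd : d * d^* = P%:C%C by rewrite RRe_real ?ger0_real ?exprn_ge0 // normCK.
have q1_gt0 : 0 < q + 1 by rewrite ltr_wpDl.
pose s := (q + 1)^-1; have s_gt0 : 0 < s by rewrite invr_gt0.
have sq1 : s * (q + 1) = 1 by rewrite mulVf ?gt_eqF.
have sq : s * q = 1 - s by rewrite -[1 in RHS]sq1 mulrDr mulr1 addrK.
have s_real : (s%:C%C)^* = s%:C%C.
  by apply/eqP; rewrite -CrealE ger0_real // ler0c ltW.
(* test the approximate minimality of [u] against [u - s (A v u - A v y)^* v] *)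
have shift : energy y (u + (- s%:C%C * d^*) *: v)
             = energy y u + (s%:C%C ^+ 2 * q%:C%C - 2 * s%:C%C) * (d * d^*).
  by rewrite energy_shift // -/d !rmorphM !rmorphN /= conjCK s_real Avv; ring.
have := u_min _ (domD u_dA (domZ (- s%:C%C * d^*) v_dA)).
rewrite shift dd -rmorphXn -rmorphM -[2](rmorph_nat (real_complex R)).
rewrite -rmorphM -rmorphB -rmorphM.
rewrite [Re (energy y u + _)]raddfD /=; move: (Re (energy y u)) => E shift_ge.
have sP_le : s * P <= e.
  have coef : s ^+ 2 * q - 2 * s = - s - s ^+ 2 by rewrite expr2 -mulrA sq; ring.
  by move: shift_ge; rewrite coef; have := mulr_ge0 (sqr_ge0 s) P_ge0; nra.
have -> : P = (q + 1) * (s * P) by rewrite mulrA [(q + 1) * s]mulrC sq1 mul1r.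
by rewrite ler_pM2l.
Qed.

Lemma repJ_exists y : domJ dA A y -> exists u, repJ dA A u y.
Proof.
move=> /energy_minimizing_exists [u u_min]; exists u.
split=> [|v v_dA]; first exact: energy_minimizing_cauchyA u_min.
apply/cvg_seqP => eps eps_gt0.
have Avv1_gt0 : 0 < A v v + 1 by rewrite ltr_wpDl ?op_ge0.
have [N hN] := harmonicC_le (divr_gt0 (exprn_gt0 2 eps_gt0) Avv1_gt0).
exists N => n Nn; have [un_dA un_min] := u_min n.
suff : `|A v y - A v (u n)| ^+ 2 <= eps ^+ 2 by rewrite ler_pXn2r // ?nnegrE ?ltW.
have eps2_ge0 : 0 <= eps ^+ 2 by rewrite exprn_ge0 // ltW.
have d2_ge0 : 0 <= `|A v (u n) - A v y| ^+ 2 by rewrite exprn_ge0.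
rewrite -normrN opprB lec_Re //.
apply: le_trans (energy_minimizing_variation un_dA v_dA un_min) _.
rewrite -lecR rmorphM rmorphD rmorph1 /= RRe_real ?ger0_real ?op_ge0 //.
rewrite fmorphV rmorph_nat RRe_real ?ger0_real //.
apply: le_trans (ler_wpM2l (ltW Avv1_gt0) (hN n Nn)) _.
by rewrite mulrC divfK ?gt_eqF.
Qed.

Variable E : {linear X -> X}.
Hypothesis contE : continuous E.
Hypothesis AE : forall x, dA x -> dA (E x) /\ A (E x) = dual_op E (A x).

Lemma domE x : dA x -> dA (E x). Proof. by case/AE. Qed.

Lemma opE x w : dA x -> A (E x) w = A x (E w). Proof. by case/AE => _ ->. Qed.

Lemma dom_iterE k x : dA x -> dA (iter k E x).
Proof. by move=> x_dA; elim: k => //= k; apply: domE. Qed.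

Lemma op_iterE k x w : dA x -> A (iter k E x) w = A x (iter k E w).
Proof.
move=> x_dA; elim: k w => // k IHk w.
have iter_dA := dom_iterE k x_dA.
by rewrite (_ : iter k.+1 E x = E (iter k E x)) // opE // IHk iterSr.
Qed.

Lemma opE_le : exists2 L : C, 0 < L & forall x, dA x -> A (E x) (E x) <= L * A x x.
Proof.
have [L L_gt0 EL] := continuous_linear_le_norm contE.
exists (L ^+ 2) => [|x x_dA]; first exact: exprn_gt0.
have [K K_gt0 AxK] := dual_le_norm (op_dual x_dA).
have iterE_le k w : `|iter k E w| <= L ^+ k * `|w|.
  elim: k => [|k IHk]; first by rewrite mul1r.
  by rewrite iterS exprS -mulrA (le_trans (EL _)) // ler_pM2l.
pose a k := A (iter k E x) (iter k E x).
have a_iter k : a k = A x (iter (k + k) E x) by rewrite /a op_iterE // iterD.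
apply: (@logconvexC_le_geometric R a (L ^+ 2) (K * `|x|)) => [|k|k|k].
- exact: exprn_gt0.
- exact/op_ge0/dom_iterE.
- have := op_CauchySchwarz (dom_iterE k x_dA) (dom_iterE k.+2 x_dA).
  rewrite op_iterE // -iterD -addSnnS -a_iter ger0_norm //.
  exact/op_ge0/dom_iterE.
- have ak_ge0 : 0 <= a k by exact/op_ge0/dom_iterE.
  rewrite -(ger0_norm ak_ge0) a_iter.
  apply: le_trans (AxK _) _; rewrite -mulrA ler_pM2l // mulrC -exprM mul2n.
  by rewrite -addnn iterE_le.
Qed.

Lemma domJ_E y : domJ dA A y -> domJ dA A (E y).
Proof.
move=> /domJ_ge0 [c [c_ge0 yc]]; have [L L_gt0 EL] := opE_le.
exists (c * L) => v v_dA; rewrite -opE //.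
by rewrite (le_trans (yc _ (domE v_dA))) // -mulrA ler_wpM2l // EL.
Qed.

Lemma repJ_E u y : repJ dA A u y -> repJ dA A (fun n => E (u n)) (E y).
Proof.
move=> [[u_dA u_cauchy] uy]; have [L L_gt0 EL] := opE_le.
split; first split=> [n|eps eps_gt0]; first exact: domE.
  have [N uN] := u_cauchy (eps / L) (divr_gt0 eps_gt0 L_gt0).
  exists N => n m Nn Nm; rewrite -linearB.
  apply: le_trans (EL _ (domB (u_dA n) (u_dA m))) _.
  by rewrite -ler_pdivlMl // mulrC uN.
move=> v v_dA; rewrite -opE //.
have -> : (fun n => A v (E (u n)) : C^o) = (fun n => A (E v) (u n)).
  by apply/funext => n; rewrite opE.
exact: uy _ (domE v_dA).
Qed.

Lemma tA_E x y c : domJ dA A x -> tA dA A (E x) y c -> tA dA A x (E y) c.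
Proof.
move=> /repJ_exists [u ux] [u' [w [u'Ex wy u'wc]]].
exists u, (fun n => E (w n)); split; [exact: ux | exact: repJ_E wy |].
have -> : (fun n => A (u n) (E (w n)) : C^o) = (fun n => A (E (u n)) (w n)).
  by apply/funext => n; rewrite opE //; case: ux => [[]].
exact: repJ_cvg_unique (repJ_E ux) u'Ex wy.1 u'wc.
Qed.

End PositiveOperator.

Lemma dual_op_in_dual (R : realType) (X : completeNormedModType R[i])
    (E : {linear X -> X}) (v : X -> R[i]) :
  continuous E -> in_dual v -> in_dual (dual_op E v).
Proof.
move=> contE [vL vc]; split=> [a x y|x]; first by rewrite /dual_op linearP vL.
exact: continuous_comp (contE x) (vc (E x)).
Qed.

Section FormSum.
Variables (R : realType) (X : completeNormedModType R[i]).
Variables (dA : set X) (A : X -> X -> R[i]) (dB : set X) (B : X -> X -> R[i]).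
Hypotheses (opA : operator dA A) (saA : self_adjoint dA A).
Hypotheses (posA : positive_op dA A) (lbA : pos_lower_bound dA A).
Hypotheses (opB : operator dB B) (saB : self_adjoint dB B).
Hypotheses (posB : positive_op dB B) (lbB : pos_lower_bound dB B).
Variable E : {linear X -> X}.
Hypothesis contE : continuous E.
Hypothesis AE : forall x, dA x -> dA (E x) /\ A (E x) = dual_op E (A x).
Hypothesis BE : forall x, dB x -> dB (E x) /\ B (E x) = dual_op E (B x).

Lemma HAB_E y : HAB dA A dB B y -> HAB dA A dB B (E y).
Proof.
case=> yA yB; split.
- exact: (domJ_E opA saA posA lbA contE AE yA).
- exact: (domJ_E opB saB posB lbB contE BE yB).
Qed.

Lemma tform_E x y c : HAB dA A dB B x ->
  tform dA A dB B (E x) y c -> tform dA A dB B x (E y) c.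
Proof.
case=> xA xB [cA [cB [tAc tBc ->]]]; exists cA, cB; split.
- exact: (tA_E opA saA posA lbA contE AE xA tAc).
- exact: (tA_E opB saB posB lbB contE BE xB tBc).
- by [].
Qed.

Lemma form_sum_E x z : form_sum dA A dB B x z ->
  form_sum dA A dB B (E x) (dual_op E z).
Proof.
case=> [xH _ z_dual zx]; have [K K_gt0 zK] := dual_le_norm z_dual.
have [L L_gt0 EL] := continuous_linear_le_norm contE.
split; [exact: HAB_E | | exact: dual_op_in_dual | ].
  exists (K * L) => y c yH /(tform_E xH) tc; rewrite -(zx _ _ (HAB_E yH) tc).
  by rewrite (le_trans (zK _)) // -mulrA ler_pM2l // EL.
by move=> y c yH /(tform_E xH); apply: zx; apply: HAB_E.
Qed.

End FormSum.

Theorem theorem5 (R : realType) (X : completeNormedModType R[i])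
  (dA : set X) (A : X -> X -> R[i]) (dB : set X) (B : X -> X -> R[i])
  (E : X -> X) :
  reflexive_space X ->
  operator dA A -> positive_op dA A -> self_adjoint dA A ->
  pos_lower_bound dA A ->
  operator dB B -> positive_op dB B -> self_adjoint dB B ->
  pos_lower_bound dB B ->
  dense (HAB dA A dB B) ->
  (forall (a : R[i]) (x y : X), E (a *: x + y) = a *: E x + E y) ->
  continuous E ->
  (forall x, dA x -> dA (E x)) ->
  (forall x, dB x -> dB (E x)) ->
  (forall x, dA x -> dA (E x) /\ A (E x) = dual_op E (A x)) ->
  (forall x, dB x -> dB (E x) /\ B (E x) = dual_op E (B x)) ->
  forall (x : X) (z : X -> R[i]),
    form_sum dA A dB B x z -> form_sum dA A dB B (E x) (dual_op E z).
Proof.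
(* reflexivity and density only make the form sum meaningful; the domain
   invariance of [E] is also part of the intertwining hypotheses *)
move=> _ opA posA saA lbA opB posB saB lbB _ linE contE _ _ AE BE.
pose lE : {linear X -> X} := HB.pack E (GRing.isLinear.Build _ _ _ _ _ linE).
exact: (form_sum_E opA saA posA lbA opB saB posB lbB (E := lE) contE AE BE).
Qed.
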